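(* In the imperfect-anticipation two-period setting described in the context, suppose: (i) $\{Y_{i0}(a,d),Y_{i1}(d),D_i,A_i\}_{i=1}^n$ are i.i.d. across $i$; (ii) $Y_{i0}(0,0)=Y_{i0}(0,1)=Y_{i0}(1,0)=Y_{i0}(-1,1)$ and $Y_{i0}(-1,0)=Y_{i0}(1,1)$; (iii) $\mathbb{E}[g(Y_{i1}(0))-g(Y_{i0}(0,0))\mid D_i=1]=\mathbb{E}[g(Y_{i1}(0))-g(Y_{i0}(0,0))\mid D_i=0]$; (iv) $\mathbb{P}[A_i\neq0\mid D_i=1]\le\pi$, $\mathbb{P}[A_i\neq0\mid D_i=0]\le\pi$, and $\mathbb{P}[A_i=-1\mid D_i=1,A_i\ne0]=\mathbb{P}[A_i=-1\mid D_i=0,A_i\ne0]=\varepsilon$; (v) $|\tau_g|\le|\mu_g|$. Let $m_g=\mathbb{E}[g(Y_{i1})-g(Y_{i0})\mid D_i=1]-\mathbb{E}[g(Y_{i1})-g(Y_{i0})\mid D_i=0]$, $\mu_{g,1}(\varepsilon)=\frac{m_g}{1+\operatorname{sgn}(\tau_g\mu_g)\pi\varepsilon}$ and $\mu_{g,2}(\varepsilon)=\frac{m_g}{1-\operatorname{sgn}(\tau_g\mu_g)\pi(1-\varepsilon)}$. Then \[\mu_g\in\left[\min\{\mu_{g,1}(\varepsilon),\mu_{g,2}(\varepsilon)\},\ \max\{\mu_{g,1}(\varepsilon),\mu_{g,2}(\varepsilon)\}\right].\]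
   Context: Two periods $t\in\{0,1\}$, units $i=1,\dots,n$. Each unit has an observed binary treatment $D_i\in\{0,1\}$ (in period 1) and an unobserved anticipation status $A_i\in\{-1,0,1\}$ in period 0: $A_i=0$ means no anticipation, $A_i=1$ means the unit anticipates and its anticipated treatment status equals its actual $D_i$, $A_i=-1$ means it anticipates incorrectly (anticipated status $1-D_i$). Potential outcomes: period 0, $Y_{i0}(a,d)$ for $a\in\{-1,0,1\}$, $d\in\{0,1\}$; period 1, $Y_{i1}(d)$. Observed outcomes: $Y_{i0}=Y_{i0}(A_i,D_i)$, $Y_{i1}=Y_{i1}(D_i)$. $g$ is a known measurable real function with finite expectations of $g$ of the outcomes; $\pi\in(0,1)$ and $\varepsilon\in[0,1]$ are given. Parameter of interest: $\mu_g=\mathbb{E}[g(Y_{i1}(1))-g(Y_{i1}(0))\mid D_i=1]$. The anticipatory effect $\tau_g$ is defined by $\tau_g=\mathbb{E}[g(Y_{i0}(1,1))-g(Y_{i0}(0,0))\mid D_i=1,A_i=1]=\mathbb{E}[g(Y_{i0}(-1,0))-g(Y_{i0}(0,0))\mid D_i=1,A_i=-1]$, the model requiring these two quantities to be equal. $\operatorname{sgn}$ is the sign function. *)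

From HB Require Import structures.
From mathcomp Require Import all_boot all_order all_algebra.
From mathcomp Require Import all_classical all_reals all_analysis.
Set Implicit Arguments. Unset Strict Implicit. Unset Printing Implicit Defensive.
Import Order.TTheory GRing.Theory Num.Theory.
Local Open Scope classical_set_scope.
Local Open Scope ring_scope.

Inductive antic : Type := Aminus | Azero | Aplus.

Section Defs.
Context {d : measure_display} {T : measurableType d} {R : realType}.

(* Conditional expectation of a real random variable f given an event B:
   E[f | B] = E[f 1_B] / P(B)   (with the convention x/0 = 0). *)
Definition cexp (P : probability T R) (f : T -> R) (B : set T) : R :=
  fine (\int[P]_(x in B) (f x)%:E) / fine (P B).

(* Conditional probability P[A | B] = P(A /\ B) / P(B) (x/0 = 0). *)
Definition cprob (P : probability T R) (A B : set T) : R :=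
  fine (P (A `&` B)) / fine (P B).

End Defs.

(* On {D = 1} the observed period-0 outcome is Y0(0,0) except on {A = 1},
   where it is Y0(1,1); on {D = 0} it is Y0(0,0) except on {A = -1}, where it
   is Y0(-1,0).  Splitting both observed trends accordingly and using parallel
   trends gives  m = mu - tau ((1 - eps) q1 - eps q0)  with
   q_b = P[A <> 0 | D = b] in [0, pi].  Thus m = mu (1 - rho c), where
   rho = tau / mu lies in [-1, 1] and has the sign s of tau mu, and
   c lies in [-pi eps, pi (1 - eps)]; so 1 - rho c lies between the positive
   numbers 1 + s pi eps and 1 - s pi (1 - eps), and dividing m by either one
   brackets mu. *)

From HB Require Import structures.
From mathcomp Require Import all_boot all_order all_algebra.
From mathcomp Require Import all_classical all_reals all_analysis.
From mathcomp Require Import ring lra.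
Set Implicit Arguments. Unset Strict Implicit. Unset Printing Implicit Defensive.
Import Order.TTheory GRing.Theory Num.Theory numFieldNormedType.Exports.
Local Open Scope classical_set_scope.
Local Open Scope ring_scope.

Section conditional_expectation.
Context {d : measure_display} {T : measurableType d} {R : realType}.
Variable P : probability T R.
Implicit Types (B C E : set T) (f h k : T -> R).

Lemma integrableB_EFin D f h : measurable D ->
  P.-integrable D (EFin \o f) -> P.-integrable D (EFin \o h) ->
  P.-integrable D (EFin \o (fun x => f x - h x)).
Proof.
move=> mD fi hi; rewrite (_ : _ \o _ = (EFin \o f) \- (EFin \o h))%E.
  exact: integrableB.
by apply/funext => x /=; rewrite EFinB.
Qed.

Lemma cexpE f B : cexp P f B = (\int[P]_(x in B) f x) / fine (P B).
Proof. by []. Qed.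

Lemma cprob_ge0 C B : 0 <= cprob P C B.
Proof. by rewrite divr_ge0 // fine_ge0 // measure_ge0. Qed.

Lemma Rintegral_cexp f B : measurable B -> P.-integrable setT (EFin \o f) ->
  \int[P]_(x in B) f x = cexp P f B * fine (P B).
Proof.
move=> mB fi; have [PB0|PB_neq0] := eqVneq (fine (P B)) 0; last by rewrite divfK.
rewrite PB0 mulr0 /Rintegral null_set_integral //.
  exact: measurable_funS measurableT (@subsetT _ B) (measurable_int _ fi).
by have := fineK (fin_num_measure P B mB); rewrite PB0 => /esym.
Qed.

Lemma measureI_cprob C B : measurable C -> measurable B ->
  fine (P (C `&` B)) = cprob P C B * fine (P B).
Proof.
move=> mC mB; have [PB0|PB_neq0] := eqVneq (fine (P B)) 0; last by rewrite divfK.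
apply/eqP; rewrite PB0 mulr0 eq_le fine_ge0 ?measure_ge0 // andbT -PB0.
by rewrite fine_le ?fin_num_measure ?measureIr //; exact: measurableI.
Qed.

Lemma cprob_setU C1 C2 B : measurable C1 -> measurable C2 -> measurable B ->
  C1 `&` C2 = set0 -> cprob P (C1 `|` C2) B = cprob P C1 B + cprob P C2 B.
Proof.
move=> mC1 mC2 mB C12; rewrite /cprob setIUl measureU; first last.
- by rewrite setIACA C12 set0I.
- exact: measurableI.
- exact: measurableI.
by rewrite fineD ?fin_num_measure ?mulrDl //; exact: measurableI.
Qed.

Lemma cprob_chain C E B : measurable C -> measurable E -> measurable B ->
  C `<=` E -> cprob P C B = cprob P C (B `&` E) * cprob P E B.
Proof.
move=> mC mE mB CE; rewrite {1}/cprob -[C `&` B](@setIidl _ _ E); last by move=> x [/CE].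
rewrite -setIA measureI_cprob; last 2 first.
- exact: mC.
- exact: measurableI.
by rewrite -mulrA [cprob P E B]/cprob (setIC E B).
Qed.

Lemma cexpB f h B : measurable B ->
  P.-integrable setT (EFin \o f) -> P.-integrable setT (EFin \o h) ->
  cexp P (fun x => f x - h x) B = cexp P f B - cexp P h B.
Proof.
move=> mB fi hi; rewrite !cexpE -mulrBl RintegralB //.
- exact: integrableS measurableT mB (@subsetT _ B) fi.
- exact: integrableS measurableT mB (@subsetT _ B) hi.
Qed.

Lemma cexp_split f h k B C : measurable B -> measurable C ->
  P.-integrable setT (EFin \o h) -> P.-integrable setT (EFin \o k) ->
  (forall x, B x -> C x -> f x = h x - k x) -> (forall x, B x -> ~ C x -> f x = h x) ->
  cexp P f B = cexp P h B - cexp P k (B `&` C) * cprob P C B.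
Proof.
move=> mB mC hi ki fC fNC.
have f_eq : {in B, f =1 fun x => h x - (k \_ C) x}.
  move=> x /set_mem Bx; have [Cx|NCx] := pselect (C x).
    by rewrite patchT ?inE //; exact: fC.
  by rewrite patchC ?inE // subr0; exact: fNC.
have kCi : P.-integrable B (EFin \o (k \_ C)).
  rewrite -restrict_EFin -integrable_restrict //.
  exact: integrableS measurableT (measurableI _ _ mB mC) (@subsetT _ _) ki.
rewrite [LHS]cexpE (eq_Rintegral _ f_eq) RintegralB //; last first.
  exact: integrableS measurableT mB (@subsetT _ B) hi.
rewrite -Rintegral_mkcondr (Rintegral_cexp (measurableI _ _ mB mC) ki) mulrBl -cexpE.
by rewrite -mulrA /cprob (setIC B C).
Qed.

Lemma cexpB_telescope f h k B : measurable B ->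
  P.-integrable setT (EFin \o f) -> P.-integrable setT (EFin \o h) ->
  P.-integrable setT (EFin \o k) ->
  cexp P (fun x => f x - h x) B = cexp P (fun x => f x - k x) B + cexp P (fun x => k x - h x) B.
Proof. by move=> mB fi hi ki; rewrite !cexpB // addrA subrK. Qed.

End conditional_expectation.

Lemma between_mulr_div (R : realFieldType) (x t lo hi : R) :
  0 < Num.min lo hi -> Num.min lo hi <= t <= Num.max lo hi ->
  Num.min (x * t / lo) (x * t / hi) <= x <= Num.max (x * t / lo) (x * t / hi).
Proof.
wlog le_lo_hi : lo hi / lo <= hi => [wlog_hyp|].
  case/orP: (le_total lo hi) => [|le_hi_lo]; first exact: wlog_hyp.
  by rewrite (minC lo) (maxC lo) (minC (x * t / lo)) (maxC (x * t / lo)); exact: wlog_hyp.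
rewrite (min_idPl le_lo_hi) (max_idPr le_lo_hi) => lo_gt0 /andP[lo_t t_hi].
have hi_gt0 : 0 < hi by exact: lt_le_trans le_lo_hi.
have [x_ge0|x_lt0] := leP 0 x.
- have le1 : x * t / hi <= x by rewrite ler_pdivrMr //; nra.
  have ge1 : x <= x * t / lo by rewrite ler_pdivlMr //; nra.
  by rewrite ge_min le_max le1 ge1 orbT.
- have le1 : x * t / lo <= x by rewrite ler_pdivrMr //; nra.
  have ge1 : x <= x * t / hi by rewrite ler_pdivlMr //; nra.
  by rewrite ge_min le_max le1 ge1 orbT.
Qed.

Lemma subr_mul_sg_between (R : realDomainType) (rho c pi eps : R) :
  `|rho| <= 1 -> 0 <= pi < 1 -> 0 <= eps <= 1 ->
  - (pi * eps) <= c <= pi * (1 - eps) ->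
  let lo := Num.min (1 + Num.sg rho * pi * eps) (1 - Num.sg rho * pi * (1 - eps)) in
  let hi := Num.max (1 + Num.sg rho * pi * eps) (1 - Num.sg rho * pi * (1 - eps)) in
  0 < lo /\ lo <= 1 - rho * c <= hi.
Proof.
move=> rho_le1 /andP[pi_ge0 pi_lt1] /andP[eps_ge0 eps_le1] /andP[c_ge c_le] /=.
have pe_ge0 : 0 <= pi * eps by exact: mulr_ge0.
have pe'_ge0 : 0 <= pi * (1 - eps) by rewrite mulr_ge0 // subr_ge0.
rewrite lt_min ge_min le_max.
have [rho0|rho_gt0|rho_lt0] := sgrP rho.
- by rewrite rho0 !mul0r !subr0 !addr0 lexx; split=> //; lra.
- move: rho_le1; rewrite gtr0_norm // => rho_le1.
  rewrite !mul1r; split; first by apply/andP; split; nra.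
  by apply/andP; split; apply/orP; [right|left]; nra.
- move: rho_le1; rewrite ltr0_norm // => rho_ge.
  rewrite !mulN1r; split; first by apply/andP; split; nra.
  by apply/andP; split; apply/orP; [left|right]; nra.
Qed.

Lemma anticipation_bias_bounds (R : realFieldType) (pi eps mu tau q1 q0 : R) :
  0 < pi < 1 -> 0 <= eps <= 1 -> 0 <= q1 <= pi -> 0 <= q0 <= pi ->
  `|tau| <= `|mu| ->
  let m := mu - tau * ((1 - eps) * q1 - eps * q0) in
  let s := Num.sg (tau * mu) in
  Num.min (m / (1 + s * pi * eps)) (m / (1 - s * pi * (1 - eps))) <= mu <=
  Num.max (m / (1 + s * pi * eps)) (m / (1 - s * pi * (1 - eps))).
Proof.
move=> /andP[pi_gt0 pi_lt1] /[dup] eps01 /andP[eps_ge0 eps_le1].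
move=> /andP[q1_ge0 q1_le] /andP[q0_ge0 q0_le] le_tau_mu /=.
set c := (1 - eps) * q1 - eps * q0.
have c_bounds : - (pi * eps) <= c <= pi * (1 - eps) by rewrite /c; apply/andP; split; nra.
have [mu0|mu_neq0] := eqVneq mu 0.
  have tau0 : tau = 0 by move: le_tau_mu; rewrite mu0 normr0 normr_le0 => /eqP.
  by rewrite mu0 tau0 mul0r subr0 !mul0r minxx maxxx lexx.
have m_eq : mu - tau * c = mu * (1 - tau / mu * c) by field.
have s_eq : Num.sg (tau * mu) = Num.sg (tau / mu) by rewrite !sgrM sgrV.
have rho_le1 : `|tau / mu| <= 1 by rewrite normrM normfV ler_pdivrMr ?normr_gt0 // mul1r.
have pi01 : 0 <= pi < 1 by rewrite ltW.
have [lo_gt0 t_between] := subr_mul_sg_between rho_le1 pi01 eps01 c_bounds.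
by rewrite m_eq s_eq; exact: between_mulr_div.
Qed.

(* The anticipation status at which, by (ii), Y0(., b) may differ from Y0(0,0). *)
Definition antic_shift (b : bool) : antic := if b then Aplus else Aminus.

Section anticipation_model.
Context {d : measure_display} {T : measurableType d} {R : realType}.
Variables (P : probability T R) (Y0 : antic -> bool -> T -> R) (Y1 : bool -> T -> R).
Variables (D : T -> bool) (A : T -> antic) (g : R -> R).
Hypothesis mD : forall b, measurable [set x | D x = b].
Hypothesis mA : forall a, measurable [set x | A x = a].
Hypothesis iY0 : forall a b, P.-integrable setT (fun x => (g (Y0 a b x))%:E).
Hypothesis iY1 : forall b, P.-integrable setT (fun x => (g (Y1 b x))%:E).
Hypothesis Y0_unshifted : forall b a x, a <> antic_shift b -> Y0 a b x = Y0 Azero false x.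

Lemma cexp_observed b :
  cexp P (fun x => g (Y1 (D x) x) - g (Y0 (A x) (D x) x)) [set x | D x = b] =
  cexp P (fun x => g (Y1 b x) - g (Y0 Azero false x)) [set x | D x = b] -
  cexp P (fun x => g (Y0 (antic_shift b) b x) - g (Y0 Azero false x))
    ([set x | D x = b] `&` [set x | A x = antic_shift b]) *
  cprob P [set x | A x = antic_shift b] [set x | D x = b].
Proof.
apply: (cexp_split (mD b) (mA (antic_shift b))) => [||x /= ->|x /= ->].
- exact: integrableB_EFin measurableT (iY1 b) (iY0 _ _).
- exact: integrableB_EFin measurableT (iY0 _ _) (iY0 _ _).
- by move=> ->; ring.
- by move=> /Y0_unshifted ->.
Qed.

Lemma cprob_antic_neq0 B : measurable B ->
  cprob P [set x | A x <> Azero] B =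
  cprob P [set x | A x = Aplus] B + cprob P [set x | A x = Aminus] B.
Proof.
have -> : [set x | A x <> Azero] = [set x | A x = Aplus] `|` [set x | A x = Aminus].
  by apply/seteqP; split=> x /=; case: (A x) => //; by [right|left|case].
move=> mB; apply: cprob_setU => //.
by apply/seteqP; split=> x //= [->].
Qed.

Lemma cprob_Aminus B : measurable B ->
  cprob P [set x | A x = Aminus] B =
  cprob P [set x | A x = Aminus] (B `&` [set x | A x <> Azero]) *
  cprob P [set x | A x <> Azero] B.
Proof.
move=> mB; apply: cprob_chain => //; first exact: measurableC (mA Azero).
by move=> x /= ->.
Qed.

Lemma cprob_Aplus B : measurable B ->
  cprob P [set x | A x = Aplus] B =
  (1 - cprob P [set x | A x = Aminus] (B `&` [set x | A x <> Azero])) *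
  cprob P [set x | A x <> Azero] B.
Proof. by move=> mB; rewrite mulrBl mul1r -cprob_Aminus // cprob_antic_neq0 // addrK. Qed.

End anticipation_model.

Theorem theorem3 (d : measure_display) (T : measurableType d) (R : realType)
  (P : probability T R)
  (Y0 : antic -> bool -> T -> R) (Y1 : bool -> T -> R)
  (D : T -> bool) (A : T -> antic) (g : R -> R) (pi eps : R) :
  (0 < pi < 1) -> (0 <= eps <= 1) ->
  measurable_fun setT g ->
  (forall a b, measurable_fun setT (Y0 a b)) ->
  (forall b, measurable_fun setT (Y1 b)) ->
  (forall b, measurable [set x | D x = b]) ->
  (forall a, measurable [set x | A x = a]) ->
  (forall a b, P.-integrable setT (fun x => (g (Y0 a b x))%:E)) ->
  (forall b, P.-integrable setT (fun x => (g (Y1 b x))%:E)) ->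
  (0 < fine (P [set x | D x = true])) ->
  (0 < fine (P [set x | D x = false])) ->
  let D1 := [set x | D x = true] in
  let D0 := [set x | D x = false] in
  let Yobs0 := fun x => Y0 (A x) (D x) x in
  let Yobs1 := fun x => Y1 (D x) x in
  let mu := cexp P (fun x => g (Y1 true x) - g (Y1 false x)) D1 in
  let tau := cexp P (fun x => g (Y0 Aplus true x) - g (Y0 Azero false x))
                    (D1 `&` [set x | A x = Aplus]) in
  (* model requirement defining tau_g (second expression read with D_i = 0) *)
  tau = cexp P (fun x => g (Y0 Aminus false x) - g (Y0 Azero false x))
               (D0 `&` [set x | A x = Aminus]) ->
  (* (ii) *)
  (forall x, Y0 Azero false x = Y0 Azero true x /\
             Y0 Azero false x = Y0 Aplus false x /\
             Y0 Azero false x = Y0 Aminus true x /\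
             Y0 Aminus false x = Y0 Aplus true x) ->
  (* (iii) parallel trends *)
  cexp P (fun x => g (Y1 false x) - g (Y0 Azero false x)) D1 =
  cexp P (fun x => g (Y1 false x) - g (Y0 Azero false x)) D0 ->
  (* (iv) *)
  cprob P [set x | A x <> Azero] D1 <= pi ->
  cprob P [set x | A x <> Azero] D0 <= pi ->
  cprob P [set x | A x = Aminus] (D1 `&` [set x | A x <> Azero]) = eps ->
  cprob P [set x | A x = Aminus] (D0 `&` [set x | A x <> Azero]) = eps ->
  (* (v) *)
  `|tau| <= `|mu| ->
  let m := cexp P (fun x => g (Yobs1 x) - g (Yobs0 x)) D1
           - cexp P (fun x => g (Yobs1 x) - g (Yobs0 x)) D0 in
  let s := Num.sg (tau * mu) in
  let mu1 := m / (1 + s * pi * eps) in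
  let mu2 := m / (1 - s * pi * (1 - eps)) in
  Num.min mu1 mu2 <= mu <= Num.max mu1 mu2.
Proof.
(* Measurability is implied by integrability, the convention x / 0 = 0 keeps
   every identity valid without P[D = b] > 0, and the last equality of (ii)
   is already encoded in the second expression for tau. *)
move=> pi01 eps01 _ _ _ mD mA iY0 iY1 _ _ D1 D0 Yobs0 Yobs1 mu tau tau_eq Y0_eq trends
  q1_le q0_le eps1 eps0 le_tau_mu /=.
have Y0_unshifted b a x : a <> antic_shift b -> Y0 a b x = Y0 Azero false x.
  have [E01 [E0p [E0m _]]] := Y0_eq x.
  by case: b; case: a.
have obs := cexp_observed mD mA iY0 iY1 Y0_unshifted.
have m_eq : cexp P (fun x => g (Yobs1 x) - g (Yobs0 x)) D1
    - cexp P (fun x => g (Yobs1 x) - g (Yobs0 x)) D0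
  = mu - tau * ((1 - eps) * cprob P [set x | A x <> Azero] D1
                - eps * cprob P [set x | A x <> Azero] D0).
  rewrite (obs true) (obs false) /= -/D1 -/D0 -/tau -tau_eq.
  rewrite (cexpB_telescope (mD true) (iY1 true) (iY0 Azero false) (iY1 false)) -/mu trends.
  rewrite (cprob_Aplus P mA (mD true)) (cprob_Aminus P mA (mD false)) eps1 eps0.
  by rewrite -/D1 -/D0; ring.
by rewrite m_eq; apply: anticipation_bias_bounds; rewrite ?cprob_ge0.
Qed.
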